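(* Let $\beta>0$, $\sigma^2>0$ and $snr=\sigma^{-2}$. Let $P_X$ be a distribution on a constellation $\mathcal{S}\subset\mathbb{C}$ with finite second moment, and let $\omega_{\mathcal S}(\rho)$ be its scalar MMSE function (defined below). Define $\phi(v)=(\beta v+\sigma^2)^{-1}$ for $v\ge 0$, whose inverse is $\phi^{-1}(\rho)=\beta^{-1}(1/\rho-\sigma^2)$ for $0<\rho\le snr$. Assume (single fixed point) that the equation $\omega_{\mathcal S}(\rho)=\phi^{-1}(\rho)$ has exactly one solution $\rho^*>0$; equivalently, with $\zeta^*=snr/\rho^*-1$, $\zeta^*$ is the unique positive solution of $\zeta=\beta\cdot snr\cdot\omega_{\mathcal S}\big(snr/(1+\zeta)\big)$. Let $$C=\beta^{-1}\Big[\log(1+\zeta^* )-\frac{\zeta^*}{1+\zeta^*}\Big]+C_{\rm SISO}\Big(\frac{snr}{1+\zeta^*}\Big),$$ which is the constrained capacity (per signal dimension) of the large random matrix system described below. Define $\omega^*_{\mathcal C}(\rho)=\min\{\omega_{\mathcal S}(\rho),\phi^{-1}(\rho)\}$ for $0<\rho\le snr$. Then $$C=A_{\omega^*_{\mathcal C}}:=\int_0^{snr}\omega^*_{\mathcal C}(\rho)\,d\rho=\beta^{-1}\Big[\frac{\rho^*}{snr}-\log\frac{\rho^*}{snr}-1\Big]+\int_0^{\rho^*}\omega_{\mathcal S}(\rho)\,d\rho .$$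
   Context: Scalar channel: $y=\sqrt{\rho}\,x+z$ with $z\sim\mathcal{CN}(0,1)$ independent of $x\sim P_X$; $\omega_{\mathcal S}(\rho)=\mathrm{mmse}(x\mid \sqrt{\rho}x+z)=\mathrm{E}|x-\mathrm{E}[x\mid y]|^2$, a continuous nonincreasing function of $\rho\ge0$. $C_{\rm SISO}(\rho^* )=I(x;\sqrt{\rho^*}x+z)=\int_0^{\rho^*}\omega_{\mathcal S}(\rho)\,d\rho$ (I-MMSE relation). The large random matrix system is $\mathbf y=\mathbf A\mathbf x+\mathbf n$ with $\mathbf A\in\mathbb C^{M\times N}$ having IID $\mathcal{CN}(0,1/M)$ entries, $\mathbf x$ having IID entries $\sim P_X$, $\mathbf n\sim\mathcal{CN}(0,\sigma^2 I_M)$, in the limit $M,N\to\infty$ with $\beta=N/M$ fixed; $snr=\sigma^{-2}$. *)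

From HB Require Import structures.
From mathcomp Require Import all_boot all_order all_algebra.
From mathcomp Require Import all_classical all_reals all_analysis.
Set Implicit Arguments. Unset Strict Implicit. Unset Printing Implicit Defensive.
Import Order.TTheory GRing.Theory Num.Theory.
Import numFieldNormedType.Exports.
Local Open Scope classical_set_scope.
Local Open Scope ring_scope.

(* Complex numbers are represented as pairs (Re, Im) in R * R. *)
Section Channel.
Context {R : realType}.
Notation CC := (R * R)%type.

Definition cnorm2 (z : CC) : R := z.1 ^+ 2 + z.2 ^+ 2.

Definition cgauss (z : CC) : R := pi^-1 * expR (- cnorm2 z).

(* likelihood p(y | x) of the channel y = sqrt(rho) x + z, z ~ CN(0,1) *)
Definition lik (rho : R) (x y : CC) : R :=
  cgauss (y.1 - Num.sqrt rho * x.1, y.2 - Num.sqrt rho * x.2).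

Definition leb2 := ((@lebesgue_measure R) \x (@lebesgue_measure R))%E.

Definition cond_mean (P : probability CC R) (rho : R) (y : CC) : CC :=
  let den := Rintegral P setT (fun x => lik rho x y) in
  (Rintegral P setT (fun x => x.1 * lik rho x y) / den,
   Rintegral P setT (fun x => x.2 * lik rho x y) / den).

(* omega_S(rho) = mmse(x | sqrt(rho) x + z) = E|x - E[x|y]|^2,
   the expectation being over the joint law of (x, y). *)
Definition mmse (P : probability CC R) (rho : R) : R :=
  fine (\int[P]_x \int[leb2]_y
          ((cnorm2 (x.1 - (cond_mean P rho y).1, x.2 - (cond_mean P rho y).2)
            * lik rho x y)%:E))%E.

(* C_SISO(r) = I(x; sqrt(r) x + z) = \int_0^r omega_S (I-MMSE relation) *)
Definition C_SISO (P : probability CC R) (r : R) : R :=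
  Rintegral (@lebesgue_measure R) `[0, r] (mmse P).

Definition phi_inv (beta sigma2 rho : R) : R := beta^-1 * (rho^-1 - sigma2).

End Channel.

From HB Require Import structures.
From mathcomp Require Import all_boot all_order all_algebra.
From mathcomp Require Import all_classical all_reals all_analysis.
From mathcomp Require Import measurable_realfun ring.
Import Order.TTheory GRing.Theory Num.Theory.
Import numFieldNormedType.Exports.
Set Implicit Arguments. Unset Strict Implicit. Unset Printing Implicit Defensive.
Local Open Scope classical_set_scope.
Local Open Scope ring_scope.

(** Write [f] for the continuous, nonnegative MMSE function.  Since
    [phi_inv] blows up at [0+] while [f] stays bounded, and [phi_inv] vanishes
    at [snr] while [f >= 0], the intermediate value theorem and uniqueness of
    the fixed point [rho*] give [f <= phi_inv] on [(0, rho*]] and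
    [phi_inv <= f] on [[rho*, snr]].  Hence [A] splits as the integral of [f]
    over [[0, rho*]] plus the integral of [phi_inv] over [[rho*, snr]], and the
    latter is computed from the primitive [beta^-1 (ln rho - sigma2 rho)];
    [C] is the same expression rewritten through [1 + zeta* = snr / rho*]. *)

Lemma integrable_setU (d : measure_display) (T : measurableType d)
    (R : realType) (mu : measure T R) (A B : set T) (f : T -> \bar R) :
  measurable A -> measurable B -> [disjoint A & B] ->
  mu.-integrable A f -> mu.-integrable B f -> mu.-integrable (A `|` B) f.
Proof.
move=> mA mB AB /integrableP[mfA iA] /integrableP[mfB iB].
have mf := proj2 (measurable_funU f mA mB) (conj mfA mfB).
apply/integrableP; split => //.
rewrite integral_setU //; last exact: measurableT_comp.
by rewrite lte_add_pinfty.
Qed.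

Lemma Rintegral_itv_piecewise (R : realType) (h f g : R -> R) (a b c : R) :
  a <= b -> b <= c ->
  {in `]a, b]%classic, h =1 f} -> {in `]b, c]%classic, h =1 g} ->
  lebesgue_measure.-integrable `[a, b] (EFin \o f) ->
  lebesgue_measure.-integrable `[b, c] (EFin \o g) ->
  Rintegral lebesgue_measure `]a, c] h =
  Rintegral lebesgue_measure `[a, b] f + Rintegral lebesgue_measure `[b, c] g.
Proof.
move=> ab bc hf hg intf intg.
have intf' : lebesgue_measure.-integrable `]a, b] (EFin \o f).
  by apply: integrableS intf => // t /=; rewrite !in_itv /= => /andP[/ltW -> ->].
have intg' : lebesgue_measure.-integrable `]b, c] (EFin \o g).
  by apply: integrableS intg => // t /=; rewrite !in_itv /= => /andP[/ltW -> ->].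
have disj : [disjoint `]a, b] & `]b, c]].
  apply/disj_setPS => x [] /=; rewrite !in_itv /= => /andP[_ xb] /andP[bx _].
  by move: (lt_le_trans bx xb); rewrite ltxx.
rewrite (@itv_bndbnd_setU _ _ (BRight a) (BRight b) (BRight c)) ?bnd_simp //.
rewrite Rintegral_setU //; last first.
  apply: integrable_setU => //.
  - by apply: (eq_integrable _ _ _ _ intf') => // r /hf /= ->.
  - by apply: (eq_integrable _ _ _ _ intg') => // r /hg /= ->.
rewrite -(Rintegral_itv_obnd_cbnd intf') -(Rintegral_itv_obnd_cbnd intg').
by congr (_ + _); apply: eq_Rintegral.
Qed.

Section PhiInv.
Variables (R : realType) (beta sigma2 : R).
Notation phi_inv := (phi_inv beta sigma2).

Lemma continuous_phi_inv (x : R) : 0 < x -> {for x, continuous phi_inv}.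
Proof.
move=> x0; apply: continuousM; first exact: cvg_cst.
apply: continuousB; last exact: cvg_cst.
by apply: inv_continuous; rewrite gt_eqF.
Qed.

Lemma within_continuous_phi_inv (a c : R) :
  0 < a -> {within `[a, c], continuous phi_inv}.
Proof.
move=> a0; apply: continuous_in_subspaceT => r.
rewrite inE /= in_itv /= => /andP[ar _].
exact: continuous_phi_inv (lt_le_trans a0 ar).
Qed.

Lemma phi_inv_snr : phi_inv sigma2^-1 = 0.
Proof. by rewrite /phi_inv invrK subrr mulr0. Qed.

Lemma phi_inv_unbounded_at0 (M r : R) : 0 < beta -> 0 <= sigma2 -> 0 <= M ->
  0 < r -> exists2 e, 0 < e <= r & M < phi_inv e.
Proof.
move=> beta0 sigma0 M0 r0.
have den1 : 1 <= 1 + r * (beta * M + sigma2).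
  by rewrite lerDl mulr_ge0 ?addr_ge0 ?mulr_ge0 // ltW.
have den0 : 0 < 1 + r * (beta * M + sigma2) := lt_le_trans ltr01 den1.
(* [1/e = 1/r + beta M + sigma2] makes [phi_inv e = 1/(beta r) + M]. *)
exists (r / (1 + r * (beta * M + sigma2))).
  by rewrite divr_gt0 //= ler_pdivrMr // ler_peMr // ltW.
have -> : phi_inv (r / (1 + r * (beta * M + sigma2))) = beta^-1 / r + M.
  by rewrite /phi_inv; field; rewrite !gt_eqF.
by rewrite ltrDr divr_gt0 // invr_gt0.
Qed.

Lemma is_derive_phi_inv_primitive (x : R) : 0 < x ->
  is_derive x 1 (beta^-1 \*: (@ln R - sigma2 \*: id)) (phi_inv x).
Proof.
move=> x0.
have := is_deriveZ beta^-1
  (is_deriveB (is_derive1_ln x0) (is_deriveZ sigma2 (is_derive_id x (1 : R)))).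
rewrite /phi_inv /= => D; apply: (is_derive_eq D).
by rewrite -[sigma2%:A]/(sigma2 * 1) mulr1.
Qed.

Lemma Rintegral_phi_inv (a c : R) : 0 < a -> a <= c ->
  Rintegral lebesgue_measure `[a, c] phi_inv =
  beta^-1 * (ln c - sigma2 * c) - beta^-1 * (ln a - sigma2 * a).
Proof.
move=> a0; rewrite le_eqVlt => /predU1P[<-|ac].
  by rewrite set_itv1 Rintegral_set1 subrr.
set F := beta^-1 \*: (@ln R - sigma2 \*: id).
have primitive_cont x : 0 < x -> {for x, continuous F}.
  move=> x0; apply: continuousZ; first exact: cvg_cst.
  apply: continuousB; first exact: continuous_ln.
  by apply: continuousZ; [exact: cvg_cst | exact: cvg_id].
rewrite /Rintegral (@continuous_FTC2 _ _ F _ _ ac (within_continuous_phi_inv a0)) //.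
- split.
  + move=> x; rewrite in_itv /= => /andP[ax _].
    by case: (is_derive_phi_inv_primitive (lt_trans a0 ax)).
  + exact/cvg_at_right_filter/primitive_cont.
  + exact/cvg_at_left_filter/primitive_cont/(lt_trans a0 ac).
- move=> x; rewrite in_itv /= => /andP[ax _].
  have D := is_derive_phi_inv_primitive (lt_trans a0 ax).
  by rewrite derive1E derive_val.
Qed.

End PhiInv.

Section SingleCrossing.
Variables (R : realType) (f : R -> R) (beta sigma2 rhostar : R).
Notation phi_inv := (phi_inv beta sigma2).
Hypotheses (beta0 : 0 < beta) (sigma0 : 0 < sigma2).
Hypothesis f_cont : {within `[0, +oo[, continuous f}.
Hypothesis f_ge0 : forall r, 0 <= f r.
Hypotheses (rhostar_gt0 : 0 < rhostar) (rhostar_le_snr : rhostar <= sigma2^-1).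
Hypothesis rhostar_fix : f rhostar = phi_inv rhostar.
Hypothesis rhostar_uniq :
  forall rho, 0 < rho <= sigma2^-1 -> f rho = phi_inv rho -> rho = rhostar.

Lemma rhostar_between (a c : R) : 0 < a -> a <= c -> c <= sigma2^-1 ->
  Num.min (f a - phi_inv a) (f c - phi_inv c) <= 0 <=
  Num.max (f a - phi_inv a) (f c - phi_inv c) ->
  a <= rhostar <= c.
Proof.
move=> a0 ac c_snr sign_change.
have g_cont : {within `[a, c], continuous (fun r => f r - phi_inv r)}.
  move=> x; apply: continuousB; last exact: within_continuous_phi_inv.
  apply: continuous_subspaceW f_cont x => r /=.
  by rewrite !in_itv /= => /andP[ar _]; rewrite (le_trans (ltW a0) ar).
have [r] := IVT ac g_cont sign_change.
rewrite in_itv /= => /andP[ar rc] /eqP; rewrite subr_eq0 => /eqP fix_r.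
rewrite -(rhostar_uniq _ fix_r) ?ar ?rc //.
by rewrite (lt_le_trans a0 ar) (le_trans rc c_snr).
Qed.

Lemma le_phi_inv_before (r : R) : 0 < r <= rhostar -> f r <= phi_inv r.
Proof.
move=> /andP[r0]; rewrite le_eqVlt => /predU1P[->|r_lt].
  by rewrite rhostar_fix.
rewrite leNgt; apply/negP => phi_lt_f.
have f_cont0r : {within `[0, r], continuous f}.
  apply: continuous_subspaceW f_cont => t /=.
  by rewrite !in_itv /= => /andP[-> _].
have [m _ f_le_m] := EVT_max (ltW r0) f_cont0r.
have [e /andP[e0 er] fm_lt] :=
  phi_inv_unbounded_at0 beta0 (ltW sigma0) (f_ge0 m) r0.
have f_e : f e <= f m by apply: f_le_m; rewrite in_itv /= (ltW e0) er.
have /andP[_] : e <= rhostar <= r.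
  apply: rhostar_between => //; first exact: le_trans (ltW r_lt) rhostar_le_snr.
  rewrite ge_min le_max !subr_le0 !subr_ge0 (ltW phi_lt_f) orbT andbT.
  by rewrite (le_trans f_e (ltW fm_lt)).
by rewrite leNgt r_lt.
Qed.

Lemma ge_phi_inv_after (r : R) : rhostar <= r <= sigma2^-1 -> phi_inv r <= f r.
Proof.
move=> /andP[]; rewrite le_eqVlt => /predU1P[<- _|lt_r r_snr].
  by rewrite rhostar_fix.
rewrite leNgt; apply/negP => f_lt_phi.
have /andP[] : r <= rhostar <= sigma2^-1.
  apply: rhostar_between => //; first exact: lt_trans rhostar_gt0 lt_r.
  by rewrite phi_inv_snr subr0 ge_min le_max subr_le0 (ltW f_lt_phi) f_ge0 orbT.
by rewrite leNgt lt_r.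
Qed.

Lemma min_phi_inv_before :
  {in `]0, rhostar]%classic, (fun r => Num.min (f r) (phi_inv r)) =1 f}.
Proof.
by move=> r; rewrite inE /= in_itv /= => r_in; apply/min_l/le_phi_inv_before.
Qed.

Lemma min_phi_inv_after : {in `]rhostar, sigma2^-1]%classic,
  (fun r => Num.min (f r) (phi_inv r)) =1 phi_inv}.
Proof.
move=> r; rewrite inE /= in_itv /= => /andP[/ltW rs_r r_snr].
by apply/min_r/ge_phi_inv_after; rewrite rs_r.
Qed.

End SingleCrossing.

Lemma mmse_ge0 (R : realType) (P : probability (R * R)%type R) (rho : R) :
  0 <= mmse P rho.
Proof.
apply/fine_ge0/integral_ge0 => x _; apply: integral_ge0 => y _.
rewrite lee_fin mulr_ge0 ?addr_ge0 ?sqr_ge0 //.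
by rewrite /lik /cgauss mulr_ge0 ?invr_ge0 ?pi_ge0 ?expR_ge0.
Qed.

Theorem proposition1 (R : realType) (P : probability (R * R)%type R)
    (beta sigma2 rhostar : R) :
  0 < beta -> 0 < sigma2 ->
  P.-integrable setT (fun x => (cnorm2 x)%:E) ->
  {within `[0, +oo[, continuous (mmse P)} ->
  let snr := sigma2^-1 in
  0 < rhostar <= snr ->
  mmse P rhostar = phi_inv beta sigma2 rhostar ->
  (forall rho, 0 < rho <= snr ->
     mmse P rho = phi_inv beta sigma2 rho -> rho = rhostar) ->
  let zetastar := snr / rhostar - 1 in
  let C := beta^-1 * (ln (1 + zetastar) - zetastar / (1 + zetastar))
           + C_SISO P (snr / (1 + zetastar)) in
  let A := Rintegral (@lebesgue_measure R) `]0, snr]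
             (fun rho => Num.min (mmse P rho) (phi_inv beta sigma2 rho)) in
  C = A /\
  A = beta^-1 * (rhostar / snr - ln (rhostar / snr) - 1)
      + Rintegral (@lebesgue_measure R) `[0, rhostar] (mmse P).
Proof.
move=> beta0 sigma0 _ mmse_cont snr /andP[rs0 rs_snr] rs_fix rs_uniq zetastar C A.
have snr0 : 0 < snr by rewrite invr_gt0.
have mmse_int : lebesgue_measure.-integrable `[0, rhostar] (EFin \o mmse P).
  apply: continuous_compact_integrable; first exact: segment_compact.
  apply: continuous_subspaceW mmse_cont => t /=.
  by rewrite !in_itv /= => /andP[-> _].
have phi_int :
    lebesgue_measure.-integrable `[rhostar, snr] (EFin \o phi_inv beta sigma2).
  apply: continuous_compact_integrable; first exact: segment_compact.
  exact: within_continuous_phi_inv.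
have A_eq : A = beta^-1 * (rhostar / snr - ln (rhostar / snr) - 1)
    + Rintegral lebesgue_measure `[0, rhostar] (mmse P).
  rewrite /A (Rintegral_itv_piecewise (ltW rs0) rs_snr _ _ mmse_int phi_int).
  - rewrite addrC Rintegral_phi_inv // ln_div ?posrE //.
    by congr (_ + _); rewrite /snr; field; rewrite !gt_eqF.
  - exact: min_phi_inv_before (@mmse_ge0 R P) rs_snr rs_fix rs_uniq.
  - exact: min_phi_inv_after (@mmse_ge0 R P) rs0 rs_fix rs_uniq.
split=> //; rewrite A_eq /C /C_SISO.
have -> : 1 + zetastar = snr / rhostar by rewrite /zetastar addrC subrK.
have -> : snr / (snr / rhostar) = rhostar by field; rewrite !gt_eqF.
have -> : zetastar / (snr / rhostar) = 1 - rhostar / snr.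
  by rewrite /zetastar; field; rewrite !gt_eqF.
by rewrite !ln_div ?posrE //; congr (_ + _); ring.
Qed.
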